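(* Let $E$ be a Banach lattice. If $E$ has the unbounded Grothendieck property (UGP), then $E$ has the disjoint Grothendieck property (DGP); and if $E$ has the DGP, then $E$ has the weak Grothendieck property (WGP).
   Context: Let $E$ be a Banach lattice with (norm) dual $E'$. Elements $x',y'\in E'$ are disjoint if $|x'|\wedge|y'|=0$; a sequence is disjoint if its terms are pairwise disjoint. A sequence $(x_n')\subseteq E'$ is unbounded weak$^*$ convergent to $x'\in E'$ (written $x_n'\xrightarrow{uaw^*}x'$) if $|x_n'-x'|\wedge u'\to 0$ in the weak$^*$ topology $\sigma(E',E)$ for every $u'\in E'_+$. $E$ has the WGP if every disjoint sequence $(x_n')\subseteq E'$ with $x_n'\to 0$ weak$^*$ satisfies $x_n'\to 0$ weakly (i.e. in $\sigma(E',E'')$). $E$ has the DGP if every norm bounded disjoint sequence $(x_n')\subseteq E'$ satisfies $x_n'\to 0$ weakly. $E$ has the UGP if every norm bounded sequence $(x_n')\subseteq E'$ with $x_n'\xrightarrow{uaw^*}0$ satisfies $x_n'\to0$ weakly. *)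

From HB Require Import structures.
From mathcomp Require Import all_boot all_order all_algebra.
From mathcomp Require Import all_classical all_reals all_analysis.
Set Implicit Arguments. Unset Strict Implicit. Unset Printing Implicit Defensive.
Import Order.TTheory GRing.Theory Num.Theory.
Import numFieldNormedType.Exports.
Local Open Scope classical_set_scope.
Local Open Scope ring_scope.

Record banach_lattice (R : realType) (E : completeNormedModType R) := BanachLattice {
  ble : E -> E -> Prop;
  bjoin : E -> E -> E;
  ble_refl : forall x, ble x x;
  ble_anti : forall x y, ble x y -> ble y x -> x = y;
  ble_trans : forall x y z, ble x y -> ble y z -> ble x z;
  ble_add : forall x y z, ble x y -> ble (x + z) (y + z);
  ble_scale : forall (a : R) x y, 0 <= a -> ble x y -> ble (a *: x) (a *: y);
  bjoin_ubl : forall x y, ble x (bjoin x y);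
  bjoin_ubr : forall x y, ble y (bjoin x y);
  bjoin_lub : forall x y z, ble x z -> ble y z -> ble (bjoin x y) z;
  blattice_norm : forall x y,
     ble (bjoin x (- x)) (bjoin y (- y)) -> `|x| <= `|y|
}.

Section BL.
Variables (R : realType) (E : completeNormedModType R) (L : banach_lattice E).

Definition babs (x : E) : E := bjoin L x (- x).
Definition bpos (x : E) : E := bjoin L x 0.
Definition bneg (x : E) : E := bjoin L (- x) 0.

Definition dual_elem (f : E -> R) : Prop :=
  (forall (a : R) (x y : E), f (a *: x + y) = a * f x + f y) /\
  exists C : R, forall x, `|f x| <= C * `|x|.

Definition dual_pos (f : E -> R) : Prop := forall x, ble L 0 x -> 0 <= f x.

(* A functional defined on E_+ (additive, positively homogeneous) extended
   to E by  g(x) = g(x^+) - g(x^-). *)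
Definition extend_pos (g : E -> R) : E -> R := fun x => g (bpos x) - g (bneg x).

(* Riesz--Kantorovich formulas for the dual lattice operations. *)
Definition dabs (f : E -> R) : E -> R :=
  extend_pos (fun x => sup [set f y | y in [set y | ble L (babs y) x]]).
Definition dmeet (f g : E -> R) : E -> R :=
  extend_pos (fun x =>
    inf [set f y + g (x - y) | y in [set y | ble L 0 y /\ ble L y x]]).

Definition dual_disjoint (f g : E -> R) : Prop :=
  forall x, dmeet (dabs f) (dabs g) x = 0.

Definition disjoint_seq (f : nat -> E -> R) : Prop :=
  forall n m, n <> m -> dual_disjoint (f n) (f m).

Definition norm_bounded_seq (f : nat -> E -> R) : Prop :=
  exists M : R, forall n x, `|f n x| <= M * `|x|.

Definition weakstar_cvg (f : nat -> E -> R) (g : E -> R) : Prop :=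
  forall x, (fun n => f n x) @ \oo --> g x.

(* Elements of the bidual E'' : bounded linear functionals on E'
   (bounded w.r.t. the dual norm: |phi f| <= C M whenever |f x| <= M |x|). *)
Definition bidual_elem (phi : (E -> R) -> R) : Prop :=
  (forall (a : R) (f g : E -> R), dual_elem f -> dual_elem g ->
     phi (fun x => a * f x + g x) = a * phi f + phi g) /\
  exists C : R, forall (f : E -> R) (M : R), dual_elem f -> 0 <= M ->
     (forall x, `|f x| <= M * `|x|) -> `|phi f| <= C * M.

Definition weak_cvg (f : nat -> E -> R) (g : E -> R) : Prop :=
  forall phi, bidual_elem phi -> (fun n => phi (f n)) @ \oo --> phi g.

Definition uawstar_cvg (f : nat -> E -> R) (g : E -> R) : Prop :=
  forall u, dual_elem u -> dual_pos u ->
    weakstar_cvg (fun n => dmeet (dabs (fun x => f n x - g x)) u) (fun _ => 0).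

Definition WGP : Prop :=
  forall f : nat -> E -> R, (forall n, dual_elem (f n)) -> disjoint_seq f ->
    weakstar_cvg f (fun _ => 0) -> weak_cvg f (fun _ => 0).

Definition DGP : Prop :=
  forall f : nat -> E -> R, (forall n, dual_elem (f n)) -> norm_bounded_seq f ->
    disjoint_seq f -> weak_cvg f (fun _ => 0).

Definition UGP : Prop :=
  forall f : nat -> E -> R, (forall n, dual_elem (f n)) -> norm_bounded_seq f ->
    uawstar_cvg f (fun _ => 0) -> weak_cvg f (fun _ => 0).

End BL.

From mathcomp Require Import all_boot all_order all_algebra.
From mathcomp Require Import all_classical all_reals all_analysis.
From mathcomp Require Import lra.
Set Implicit Arguments. Unset Strict Implicit. Unset Printing Implicit Defensive.
Import Order.TTheory GRing.Theory Num.Theory.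
Import numFieldNormedType.Exports.
Local Open Scope classical_set_scope.
Local Open Scope ring_scope.

(* UGP => DGP: a disjoint sequence (f_n) in E' is uaw*-null, bounded or not.
   Fix u >= 0 in E'; by x = x^+ - x^- it suffices to test (|f_n| /\ u)(x)
   for x >= 0.  Pairwise disjointness of the |f_i| lets one cut x, up to any
   eps, into pieces w_0, ..., w_(N-1) with sum w_i <= x and
   |f_i|(x - w_i) <= eps.  Evaluating the infimum defining (|f_i| /\ u)(x) at
   the splitting x = (x - w_i) + w_i gives
   sum_(i<N) (|f_i| /\ u)(x) <= N eps + u(x), hence <= u(x), so these
   nonnegative numbers tend to 0.
   DGP => WGP: weak* convergent sequences are norm bounded by the uniform
   boundedness principle. *)

Lemma cvg0_nneg_bounded_series (R : realType) (u_ : R ^nat) M :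
  (forall n, 0 <= u_ n) -> (forall N, \sum_(i < N) u_ i <= M) -> u_ @ \oo --> 0.
Proof.
move=> u_ge0 uM; apply: cvg_series_cvg_0; apply: nondecreasing_is_cvgn.
  by apply: nondecreasing_series => n _ _.
by exists M => _ [n _ <-]; rewrite /series /= big_mkord.
Qed.

Lemma cvgn_norm_bounded (R : realType) (u_ : R ^nat) :
  cvgn u_ -> exists M, forall n, `|u_ n| <= M.
Proof.
move/cvg_seq_bounded => u_bd.
have [M uM] := (ex_bound _ (PF := globally_properfilter (a := 0%N) I)).1 u_bd.
by exists M => n; apply: uM.
Qed.

Lemma natr_mul_divSn_le (R : realFieldType) n (x : R) : 0 <= x ->
  n%:R * (x / n.+1%:R) <= x.
Proof.
move=> x0; rewrite mulrCA; apply: ler_piMr => //.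
by rewrite ler_pdivrMr ?ltr0n // mul1r ler_nat.
Qed.

Section BanachLatticeDual.
Variables (R : realType) (E : completeNormedModType R) (L : banach_lattice E).
Local Notation le := (ble L).
Local Notation join := (bjoin L).

Lemma bleD2r z x y : le (x + z) (y + z) <-> le x y.
Proof.
split=> [|]; last exact: ble_add.
by move/(ble_add (- z)); rewrite !addrK.
Qed.

Lemma ble_subr_ge0 x y : le 0 (y - x) <-> le x y.
Proof. by rewrite -(bleD2r x) subrK add0r. Qed.

Lemma bleBlDl x y z : le (x - y) z <-> le x (y + z).
Proof. by rewrite -(bleD2r y) subrK addrC. Qed.

Lemma bleN2 x y : le (- x) (- y) <-> le y x.
Proof. by rewrite -ble_subr_ge0 opprK addrC ble_subr_ge0. Qed.

Lemma ble_addr_ge0 x y : le 0 x -> le 0 y -> le 0 (x + y).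
Proof. by move=> x0 /(bleD2r x); rewrite add0r addrC; apply: ble_trans. Qed.

Lemma bleBl x y : le 0 y -> le (x - y) x.
Proof. by move=> y0; rewrite bleBlDl -ble_subr_ge0 addrK. Qed.

Lemma ble_sum_ge0 (F : nat -> E) N :
  (forall i, (i < N)%N -> le 0 (F i)) -> le 0 (\sum_(i < N) F i).
Proof.
elim: N => [|N IH] F0; first by rewrite big_ord0; apply: ble_refl.
rewrite big_ord_recr /=; apply: ble_addr_ge0; last exact: F0.
by apply: IH => i /ltnW; apply: F0.
Qed.

Lemma ble_oppl x : le 0 x -> le (- x) x.
Proof. by move=> x0; apply: (ble_trans (y := 0)) => //; rewrite -oppr0 bleN2. Qed.

Definition bmeet x y := - join (- x) (- y).

Lemma bmeet_l x y : le (bmeet x y) x.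
Proof. by rewrite -bleN2 opprK; apply: bjoin_ubl. Qed.

Lemma bmeet_r x y : le (bmeet x y) y.
Proof. by rewrite -bleN2 opprK; apply: bjoin_ubr. Qed.

Lemma bmeet_glb x y z : le z x -> le z y -> le z (bmeet x y).
Proof.
move=> zx zy; rewrite /bmeet -bleN2 opprK.
by apply: bjoin_lub; rewrite bleN2.
Qed.

Lemma ble_babs z : le z (babs L z). Proof. exact: bjoin_ubl. Qed.

Lemma ble_babsN z : le (- z) (babs L z). Proof. exact: bjoin_ubr. Qed.

Lemma ger0_babs y : le 0 y -> babs L y = y.
Proof.
move=> y0; apply: ble_anti; last exact: ble_babs.
by apply: bjoin_lub; [apply: ble_refl | apply: ble_oppl].
Qed.

Lemma babs0 : babs L 0 = 0.
Proof. exact/ger0_babs/ble_refl. Qed.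

Lemma bpos_ge0 x : le 0 (bpos L x). Proof. exact: bjoin_ubr. Qed.

Lemma bneg_ge0 x : le 0 (bneg L x). Proof. exact: bjoin_ubr. Qed.

Lemma ger0_bpos x : le 0 x -> bpos L x = x.
Proof.
move=> x0; apply: ble_anti; last exact: bjoin_ubl.
by apply: bjoin_lub; [apply: ble_refl | exact: x0].
Qed.

Lemma ger0_bneg x : le 0 x -> bneg L x = 0.
Proof.
move=> x0; apply: ble_anti; last exact: bneg_ge0.
by apply: bjoin_lub; [rewrite -oppr0 bleN2 | apply: ble_refl].
Qed.

Lemma babs_ble0 z : le (babs L z) 0 -> z = 0.
Proof.
move=> z0; apply: ble_anti; first exact: ble_trans (ble_babs z) z0.
by rewrite -bleN2 oppr0; apply: ble_trans (ble_babsN z) z0.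
Qed.

Lemma norm_le_babs z y : le 0 y -> le (babs L z) y -> `|z| <= `|y|.
Proof. by move=> y0; rewrite -{1}(ger0_babs y0); apply: blattice_norm. Qed.

Lemma riesz_decomposition z y1 y2 : le 0 y1 -> le 0 y2 ->
  le (babs L z) (y1 + y2) ->
  exists z1 z2, [/\ z = z1 + z2, le (babs L z1) y1 & le (babs L z2) y2].
Proof.
move=> y10 y20 zy.
have le_z : le z (y1 + y2) := ble_trans (ble_babs z) zy.
have le_Nz : le (- z) (y1 + y2) := ble_trans (ble_babsN z) zy.
pose z1 := bmeet (join z (- y1)) y1.
exists z1, (z - z1); split; first by rewrite addrC subrK.
  apply: bjoin_lub; first exact: bmeet_r.
  rewrite -bleN2 opprK; apply: bmeet_glb; first exact: bjoin_ubr.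
  exact: ble_oppl.
apply: bjoin_lub.
  rewrite bleBlDl addrC -bleBlDl; apply: bmeet_glb.
    apply: ble_trans (bjoin_ubl _ _ _).
    by rewrite bleBlDl -ble_subr_ge0 addrK.
  by rewrite bleBlDl addrC.
rewrite opprB bleBlDl; apply: ble_trans (bmeet_l _ _) _; apply: bjoin_lub.
  by rewrite -ble_subr_ge0 addrAC subrr add0r.
rewrite -ble_subr_ge0 opprK addrC (addrC z) addrA.
by rewrite -ble_subr_ge0 opprK in le_Nz.
Qed.

Lemma dual_elemD (f : E -> R) x y : dual_elem f -> f (x + y) = f x + f y.
Proof. by case=> lin _; have := lin 1 x y; rewrite scale1r mul1r. Qed.

Lemma dual_elem0 (f : E -> R) : dual_elem f -> f 0 = 0.
Proof. by move=> df; apply: (addIr (f 0)); rewrite -dual_elemD // !add0r. Qed.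

Lemma dual_elemB (f : E -> R) x y : dual_elem f -> f (x - y) = f x - f y.
Proof. by move=> df; apply: (addIr (f y)); rewrite -dual_elemD // !subrK. Qed.

Lemma dual_elem_sum (f : E -> R) (F : nat -> E) N : dual_elem f ->
  f (\sum_(i < N) F i) = \sum_(i < N) f (F i).
Proof.
move=> df; elim: N => [|N IH]; first by rewrite !big_ord0 dual_elem0.
by rewrite !big_ord_recr /= dual_elemD // IH.
Qed.

Lemma extend_pos0 (g : E -> R) : extend_pos L g 0 = 0.
Proof. by rewrite /extend_pos /bpos /bneg oppr0 subrr. Qed.

Lemma ger0_extend_pos (g : E -> R) x : g 0 = 0 -> le 0 x ->
  extend_pos L g x = g x.
Proof. by move=> g0 x0; rewrite /extend_pos ger0_bpos // ger0_bneg // g0 subr0. Qed.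

Definition pabs_set (f : E -> R) y := [set f z | z in [set z | le (babs L z) y]].
Definition pabs (f : E -> R) y := sup (pabs_set f y).

Definition pmeet_set (a b : E -> R) x :=
  [set a y + b (x - y) | y in [set y | le 0 y /\ le y x]].
Definition pmeet (a b : E -> R) x := inf (pmeet_set a b x).

Section Modulus.
Variables (f : E -> R).
Hypothesis df : dual_elem f.

Lemma has_sup_pabs y : le 0 y -> has_sup (pabs_set f y).
Proof.
move=> y0; have [_ [C fC]] := df; split.
  by exists (f 0), 0 => //=; rewrite babs0.
exists (`|C| * `|y|) => _ [z /= zy <-].
apply: le_trans (real_ler_norm (num_real _)) _; apply: le_trans (fC z) _.
apply: le_trans (ler_wpM2r (normr_ge0 z) (real_ler_norm (num_real C))) _.
by apply: ler_wpM2l => //; apply: norm_le_babs.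
Qed.

Lemma ler_pabs y z : le 0 y -> le (babs L z) y -> f z <= pabs f y.
Proof. by move=> y0 zy; apply: sup_upper_bound (has_sup_pabs y0) _ _; exists z. Qed.

Lemma pabs0 : pabs f 0 = 0.
Proof.
rewrite /pabs (_ : pabs_set f 0 = [set 0]) ?sup1 //.
apply/seteqP; split=> [_ [z /= /babs_ble0 -> <-]|_ ->]; first by rewrite /= dual_elem0.
by exists 0; rewrite /= ?babs0 ?dual_elem0 //; apply: ble_refl.
Qed.

Lemma ger0_dabs y : le 0 y -> dabs L f y = pabs f y.
Proof. exact/ger0_extend_pos/pabs0. Qed.

Lemma dabs_ge0 : dual_pos L (dabs L f).
Proof.
by move=> y y0; rewrite ger0_dabs // -(dual_elem0 df) ler_pabs // babs0.
Qed.

Lemma ler_dabsD y1 y2 : le 0 y1 -> le 0 y2 ->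
  dabs L f (y1 + y2) <= dabs L f y1 + dabs L f y2.
Proof.
move=> y10 y20; rewrite !ger0_dabs //; last exact: ble_addr_ge0.
apply: ge_sup; first exact: (has_sup_pabs (ble_addr_ge0 y10 y20)).1.
move=> _ [z /= zy <-]; have [z1 [z2 [-> zy1 zy2]]] := riesz_decomposition y10 y20 zy.
by rewrite dual_elemD //; apply: lerD; apply: ler_pabs.
Qed.

End Modulus.

Section Meet.
Variables (a b : E -> R).
Hypotheses (a_ge0 : dual_pos L a) (b_ge0 : dual_pos L b).

Lemma pmeet_set_lb x : lbound (pmeet_set a b x) 0.
Proof.
by move=> _ [y [y0 yx] <-]; rewrite addr_ge0 ?a_ge0 ?b_ge0 ?ble_subr_ge0.
Qed.

Lemma pmeet_set_neq0 x : le 0 x -> pmeet_set a b x !=set0.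
Proof. by move=> x0; exists (a 0 + b (x - 0)), 0 => //; split=> //; apply: ble_refl. Qed.

Lemma pmeet_ge0 x : le 0 x -> 0 <= pmeet a b x.
Proof. by move=> x0; apply: lb_le_inf (pmeet_set_neq0 x0) (@pmeet_set_lb x). Qed.

Lemma pmeet_le x y : le 0 y -> le y x -> pmeet a b x <= a y + b (x - y).
Proof. by move=> y0 yx; apply: ge_inf; [exists 0; apply: pmeet_set_lb | exists y]. Qed.

Lemma pmeet0_approx x d : le 0 x -> pmeet a b x = 0 -> 0 < d ->
  exists y, [/\ le 0 y, le y x & a y + b (x - y) <= d].
Proof.
move=> x0 ab0 d0; have : pmeet a b x < d by rewrite ab0.
by case/(inf_lt (pmeet_set_neq0 x0)) => _ [y [y0 yx] <-] /ltW; exists y.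
Qed.

Lemma pmeet0 : a 0 = 0 -> b 0 = 0 -> pmeet a b 0 = 0.
Proof.
move=> a0 b0; rewrite /pmeet (_ : pmeet_set a b 0 = [set 0]) ?inf1 //.
apply/seteqP; split=> [_ [y [y0 y_le0] <-]|_ ->]; last first.
  by exists 0; [split; apply: ble_refl | rewrite subr0 a0 b0 addr0].
by rewrite (ble_anti y_le0 y0) /= subr0 a0 b0 addr0.
Qed.

End Meet.

Lemma dual_disjoint_pmeet (f g : E -> R) x :
  dual_disjoint L f g -> le 0 x -> pmeet (dabs L f) (dabs L g) x = 0.
Proof.
move=> fg x0; rewrite -(fg x) /dmeet ger0_extend_pos //.
exact: pmeet0 (extend_pos0 _) (extend_pos0 _).
Qed.

Section DisjointFamily.
Variable a : nat -> E -> R.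
Hypothesis a_ge0 : forall i, dual_pos L (a i).
Hypothesis a0 : forall i, a i 0 = 0.
Hypothesis a_subadditive : forall i y1 y2, le 0 y1 -> le 0 y2 ->
  a i (y1 + y2) <= a i y1 + a i y2.
Hypothesis a_disjoint : forall i j x, i <> j -> le 0 x -> pmeet (a i) (a j) x = 0.

Lemma subadditive_sum_le i (F : nat -> E) N c :
  (forall j, (j < N)%N -> le 0 (F j) /\ a i (F j) <= c) ->
  a i (\sum_(j < N) F j) <= N%:R * c.
Proof.
elim: N => [|N IH] Fc; first by rewrite big_ord0 a0 mul0r.
have Fc' j : (j < N)%N -> le 0 (F j) /\ a i (F j) <= c by move/ltnW; apply: Fc.
have [FN0 aFN] := Fc N (ltnSn N).
have sum0 : le 0 (\sum_(j < N) F j) by apply: ble_sum_ge0 => j /Fc' [].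
rewrite big_ord_recr /= -natr1 mulrDl mul1r.
by apply: le_trans (a_subadditive _ sum0 FN0) _; apply: lerD => //; apply: IH.
Qed.

Definition approx_partition N p d (w : nat -> E) :=
  (forall i, (i < N)%N -> [/\ le 0 (w i), le (w i) p & a i (p - w i) <= d])
  /\ le (\sum_(i < N) w i) p.

(* Each piece [w i] is split as [y i + (w i - y i)], with [a i] small on [y i] and
   [a N] small on [w i - y i]; the [y i] are handed over to the new piece. *)
Lemma approx_partition_step N p d d' e w y :
  d + d' <= e -> N%:R * d' <= e -> approx_partition N p d w ->
  (forall i, (i < N)%N ->
     [/\ le 0 (y i), le (y i) (w i) & a i (y i) + a N (w i - y i) <= d']) ->
  approx_partition N.+1 p e
    (fun i => if (i < N)%N then w i - y i else p - \sum_(j < N) (w j - y j)).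
Proof.
move=> dd'e Nd'e [w_part w_sum] y_split.
have wy0 j : (j < N)%N -> le 0 (w j - y j).
  by move=> jN; have [_ ? _] := y_split j jN; apply/ble_subr_ge0.
have y0 j : (j < N)%N -> le 0 (y j) by move=> jN; have [] := y_split j jN.
split=> [i|]; last first.
  rewrite big_ord_recr /= ltnn (eq_bigr (fun j : 'I_N => w j - y j)) => [|j _].
    by rewrite subrKC; apply: ble_refl.
  by rewrite ltn_ord.
rewrite ltnS leq_eqVlt => /orP[/eqP ->|iN]; rewrite ?ltnn ?iN.
  split.
  - apply/ble_subr_ge0; apply: ble_trans w_sum.
    by rewrite sumrB; apply/bleBl/(ble_sum_ge0 y0).
  - exact/bleBl/(ble_sum_ge0 wy0).
  - rewrite opprB subrKC; apply: le_trans Nd'e.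
    apply: (subadditive_sum_le (F := fun j => w j - y j)) => j jN.
    have [yj0 _ ayj] := y_split j jN; split; first exact: wy0.
    by apply: le_trans ayj; rewrite lerDr; apply: a_ge0.
have [wi0 wip awi] := w_part i iN; have [yi0 _ ayi] := y_split i iN.
have pwi0 : le 0 (p - w i) by apply/ble_subr_ge0.
split; [exact: wy0 | exact: ble_trans (bleBl _ yi0) wip |].
rewrite opprB addrCA addrC; apply: le_trans (a_subadditive _ pwi0 yi0) _.
apply: le_trans dd'e; apply: lerD => //; apply: le_trans ayi.
by rewrite lerDl; apply: a_ge0; apply: wy0.
Qed.

Lemma approx_partition_exists N p d : le 0 p -> 0 < d ->
  exists w, approx_partition N p d w.
Proof.
move=> p0; elim: N d => [|N IH] d d0.
  by exists (fun=> 0); split=> [//|]; rewrite big_ord0.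
pose d' := d / 2 / N.+1%:R.
have d'0 : 0 < d' by rewrite !divr_gt0 ?ltr0n.
have [w [w_part w_sum]] := IH (d / 2) (divr_gt0 d0 (ltr0n _ 2)).
have split_w i : exists yi, (i < N)%N ->
    [/\ le 0 yi, le yi (w i) & a i yi + a N (w i - yi) <= d'].
  case: (ltnP i N) => iN; last by exists 0.
  have [wi0 _ _] := w_part i iN.
  have iN' : i <> N by move=> eiN; rewrite eiN ltnn in iN.
  have [yi ?] := pmeet0_approx wi0 (a_disjoint iN' wi0) d'0.
  by exists yi.
have [y y_split] := choice split_w.
have d'_le : d' <= d / 2.
  by rewrite ler_pdivrMr ?ltr0n // ler_peMr ?ler1n // ltW ?divr_gt0.
have Nd'_le : N%:R * d' <= d / 2 by apply: natr_mul_divSn_le; rewrite ltW ?divr_gt0.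
exists (fun i => if (i < N)%N then w i - y i else p - \sum_(j < N) (w j - y j)).
by apply: approx_partition_step (conj w_part w_sum) y_split; lra.
Qed.


Lemma sum_pmeet_le (u : E -> R) p N : dual_elem u -> dual_pos L u -> le 0 p ->
  \sum_(i < N) pmeet (a i) u p <= u p.
Proof.
move=> du u_ge0 p0; apply/ler_addgt0Pr => eps eps0.
pose d := eps / N.+1%:R.
have d0 : 0 < d by rewrite divr_gt0 ?ltr0n.
have [w [w_part w_sum]] := approx_partition_exists N p0 d0.
apply: (le_trans (y := \sum_(i < N) (a i (p - w i) + u (w i)))).
  apply: ler_sum => i _; have [wi0 wip _] := w_part i (ltn_ord i).
  have pw0 : le 0 (p - w i) by apply/ble_subr_ge0.
  by have := pmeet_le (a_ge0 i) u_ge0 pw0 (bleBl _ wi0); rewrite opprB subrKC.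
rewrite big_split /= -(dual_elem_sum w N du) [u p + _]addrC lerD //; last first.
  by rewrite -subr_ge0 -dual_elemB //; apply/u_ge0/ble_subr_ge0.
apply: (le_trans (y := \sum_(i < N) d)).
  by apply: ler_sum => i _; have [] := w_part i (ltn_ord i).
by rewrite sumr_const card_ord -mulr_natl natr_mul_divSn_le // ltW.
Qed.

End DisjointFamily.

Lemma pmeet_disjoint_cvg0 (f : nat -> E -> R) (u : E -> R) p :
  (forall n, dual_elem (f n)) -> disjoint_seq L f ->
  dual_elem u -> dual_pos L u -> le 0 p ->
  (fun n => pmeet (dabs L (f n)) u p) @ \oo --> 0.
Proof.
move=> df fdisj du u_ge0 p0.
have a_ge0 i : dual_pos L (dabs L (f i)) := dabs_ge0 (df i).
apply: (@cvg0_nneg_bounded_series _ _ (u p)) => [n|N].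
  exact: pmeet_ge0.
apply: (sum_pmeet_le a_ge0) => // [i|i|i j x ij x0].
- exact: extend_pos0.
- exact: ler_dabsD.
- exact: dual_disjoint_pmeet (fdisj i j ij) x0.
Qed.

Lemma disjoint_uawstar_cvg0 (f : nat -> E -> R) :
  (forall n, dual_elem (f n)) -> disjoint_seq L f -> uawstar_cvg L f (fun=> 0).
Proof.
move=> df fdisj u du u_ge0 x.
have fE n : (fun y => f n y - 0) = f n by apply: funext => y; rewrite subr0.
under eq_fun do rewrite fE.
rewrite -(subr0 (0 : R)).
exact: cvgB (pmeet_disjoint_cvg0 df fdisj du u_ge0 (bpos_ge0 x))
            (pmeet_disjoint_cvg0 df fdisj du u_ge0 (bneg_ge0 x)).
Qed.

Lemma weakstar_cvg_norm_bounded (f : nat -> E -> R) (g : E -> R) :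
  (forall n, dual_elem (f n)) -> weakstar_cvg f g -> norm_bounded_seq f.
Proof.
move=> df fg.
have : uniform_bounded (range f : set (E -> R^o)).
  apply: Banach_Steinhauss.
    move=> _ [n _ <-]; have [lin [C fC]] := df n; split; last by move=> ? ? ?; apply: lin.
    move=> r; exists (`|C| * r) => x xr; apply: le_trans (fC x) _.
    apply: le_trans (ler_wpM2r (normr_ge0 x) (real_ler_norm (num_real C))) _.
    exact: ler_wpM2l.
  move=> x; have [M fxM] := cvgn_norm_bounded (cvgP _ (fg x)).
  by exists M => _ [n _ <-].
case/(_ 1) => M fM; exists M => n x.
have [->|x_neq0] := eqVneq x 0; first by rewrite dual_elem0 // !normr0 mulr0.
have x_pos : 0 < `|x| by rewrite normr_gt0.
have x_eq : x = `|x| *: (`|x|^-1 *: x) + 0 by rewrite addr0 scalerA divff ?gt_eqF // scale1r.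
have [lin _] := df n; rewrite {1}x_eq lin dual_elem0 // addr0 normrM gtr0_norm //.
rewrite mulrC ler_pM2r //; apply: fM; first by exists n.
by rewrite normrZ normfV normr_id mulVf ?gt_eqF.
Qed.

End BanachLatticeDual.

Theorem lemma2p2 (R : realType) (E : completeNormedModType R)
  (L : banach_lattice E) :
  (UGP L -> DGP L) /\ (DGP L -> WGP L).
Proof.
split=> [ugp f df fbd fdisj | dgp f df fdisj fws].
  by apply: ugp => //; apply: disjoint_uawstar_cvg0.
by apply: dgp => //; apply: weakstar_cvg_norm_bounded fws.
Qed.
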